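(* Assume the setting described in the context, with vertex polynomials $p_1,\dots,p_{2^m}$. Then: (i) $\Psi^-$ is initially positive if and only if every $p_i$ is initially positive; (ii) $\Psi^+$ is initially positive if and only if at least one $p_i$ is initially positive; (iii) there exists $\kappa\ge0$ with $\Psi^-(\kappa)<0$ if and only if there exist $\kappa\ge 0$ and an index $i$ with $p_i(\kappa)<0$; (iv) there exists $\kappa\ge0$ with $\Psi^+(\kappa)<0$ if and only if there exists $\kappa\ge0$ with $p_i(\kappa)<0$ for all $i$.
   Context: Let $n,m\ge 1$, $B\in\mathbb{Z}^{n\times m}$, $C\in\mathbb{Z}^{m\times n}$, and $J_2,J_4\in\mathbb{R}^{n\times n}$ symmetric. Given bounds $0\le \Delta_j^-\le \Delta_j^+<\infty$ ($j=1,\dots,m$), $\mathcal{D}$ is the set of diagonal matrices $\Delta=\mathrm{diag}(\Delta_1,\dots,\Delta_m)$ with $\Delta_j^-\le\Delta_j\le\Delta_j^+$. For real $\kappa\ge0$, $\Psi^-(\kappa)=\min_{\Delta\in\mathcal{D}}\det[-(B\Delta C+\kappa^2J_2+\kappa^4J_4)]$ and $\Psi^+(\kappa)=\max_{\Delta\in\mathcal{D}}\det[-(B\Delta C+\kappa^2J_2+\kappa^4J_4)]$. Let $\Delta^{(1)},\dots,\Delta^{(2^m)}$ be the vertices of $\mathcal{D}$ (all $\Delta_j\in\{\Delta_j^-,\Delta_j^+\}$) and $p_i(\kappa)=\det[-(B\Delta^{(i)}C+\kappa^2J_2+\kappa^4J_4)]$. A function $f$ on $[0,\infty)$ is initially positive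 if there is $\hat\kappa>0$ with $f(\kappa)>0$ for all $\kappa\in(0,\hat\kappa)$. *)

From HB Require Import structures.
From mathcomp Require Import all_boot all_order all_algebra.
From mathcomp Require Import boolp classical_sets reals.
Set Implicit Arguments. Unset Strict Implicit. Unset Printing Implicit Defensive.
Import Order.TTheory GRing.Theory Num.Theory.
Local Open Scope ring_scope.
Local Open Scope classical_set_scope.

Section Defs.
Variables (R : realType) (n m : nat).
Variables (B : 'M[int]_(n, m)) (C : 'M[int]_(m, n)) (J2 J4 : 'M[R]_n).

Definition Mk (d : 'rV[R]_m) (k : R) : 'M[R]_n :=
  - (map_mx intr B *m diag_mx d *m map_mx intr C + (k ^+ 2) *: J2 + (k ^+ 4) *: J4).

Definition detk (d : 'rV[R]_m) (k : R) : R := \det (Mk d k).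

(* The box D of admissible diagonal matrices, encoded by their diagonals. *)
Definition Dset (dm dp : 'I_m -> R) : set 'rV[R]_m :=
  [set d | forall j : 'I_m, dm j <= d ord0 j <= dp j].

(* Ψ^- and Ψ^+ : min / max over the compact box D (attained, so = inf / sup). *)
Definition Psi_minus (dm dp : 'I_m -> R) (k : R) : R :=
  inf [set detk d k | d in Dset dm dp].
Definition Psi_plus (dm dp : 'I_m -> R) (k : R) : R :=
  sup [set detk d k | d in Dset dm dp].

Definition vertex (dm dp : 'I_m -> R) (s : {ffun 'I_m -> bool}) : 'rV[R]_m :=
  \row_j (if s j then dp j else dm j).

Definition pvert (dm dp : 'I_m -> R) (s : {ffun 'I_m -> bool}) (k : R) : R :=
  detk (vertex dm dp s) k.
End Defs.

Definition initially_positive (R : realType) (f : R -> R) : Prop :=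
  exists khat : R, 0 < khat /\ forall k : R, 0 < k < khat -> 0 < f k.

(* Δ_j enters -(B Δ C + κ^2 J2 + κ^4 J4) only through the rank-one term
   Δ_j b_j c_j (b_j the j-th column of B, c_j the j-th row of C), so each
   determinant is affine in every Δ_j separately.  A multiaffine function on a
   box attains its minimum and maximum at vertices, hence Ψ^- and Ψ^+ are the
   pointwise minimum and maximum of the finitely many vertex polynomials p_s.
   Statements (i), (iii) and (iv) hold for the lower or upper envelope of any
   finite family of functions; (ii) also needs that each p_s, being a
   polynomial, has a constant sign on some interval (0, ε). *)

From HB Require Import structures.
From mathcomp Require Import all_boot all_order all_algebra.
From mathcomp Require Import boolp classical_sets reals.
From mathcomp Require Import polyrcf ring lra.
Set Implicit Arguments. Unset Strict Implicit. Unset Printing Implicit Defensive.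
Import Order.TTheory GRing.Theory Num.Theory.
Local Open Scope ring_scope.

Lemma det_add_rank1 (F : fieldType) (n : nat) (N : 'M[F]_n) (u : 'cV_n) (w : 'rV_n) t :
  \det (N + t *: (u *m w)) = (1 - t) * \det N + t * \det (N + u *m w).
Proof.
(* The bordered matrix [[1, s w], [-u, N]] has determinant det (N + s u w) by
   elimination, and is affine in s since s only occurs in its first row. *)
pose Big s : 'M_(1 + n) := block_mx 1%:M (s *: w) (- u) N.
have detBig s : \det (Big s) = \det (N + s *: (u *m w)).
  have : block_mx 1%:M 0 u 1%:M *m Big s = block_mx 1%:M (s *: w) 0 (N + s *: (u *m w)).
    by rewrite mulmx_block !mul1mx !mul0mx !addr0 mulmx1 addrN -scalemxAr addrC.
  by move/(congr1 determinant); rewrite det_mulmx det_lblock det_ublock !det1 !mul1r.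
have top : (ord0 : 'I_(1 + n)) = lshift n ord0 by apply/val_inj.
have row0 : row ord0 (Big t) = (1 - t) *: row ord0 (Big 0) + t *: row ord0 (Big 1).
  apply/rowP => j; rewrite !mxE top (unsplitK (inl ord0)) /=.
  by case: (split_ordP j) => j' ->; rewrite ?row_mxEl ?row_mxEr !mxE; ring.
have row'0 s : row' ord0 (Big s) = row' ord0 (Big t).
  apply/matrixP => i j; rewrite !mxE.
  have -> : lift ord0 i = rshift 1 i by apply/val_inj.
  by rewrite (unsplitK (inr i)).
have det0 : \det (Big 0) = \det N by rewrite detBig scale0r addr0.
have det1 : \det (Big 1) = \det (N + u *m w) by rewrite detBig scale1r.
by rewrite -detBig -det0 -det1 (determinant_multilinear row0) ?row'0.
Qed.

Definition multiaffine (R : ringType) (m : nat) (F : 'rV[R]_m -> R) :=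
  forall d j t, F (d + t *: delta_mx 0 j) = (1 - t) * F d + t * F (d + delta_mx 0 j).

Lemma multiaffineN (R : ringType) (m : nat) (F : 'rV[R]_m -> R) :
  multiaffine F -> multiaffine (fun d => - F d).
Proof. by move=> hF d j t; rewrite hF mulrN mulrN opprD. Qed.

Section VertexExtremum.
Variables (R : realType) (m : nat) (dm dp : 'I_m -> R).
Hypothesis le_dm_dp : forall j, dm j <= dp j.

Lemma vertex_in_box s : Dset dm dp (vertex dm dp s).
Proof. by move=> j; rewrite mxE; case: (s j); rewrite le_dm_dp lexx. Qed.

Lemma add_delta_mxE (d : 'rV[R]_m) j t i :
  (d + t *: delta_mx 0 j) ord0 i = d ord0 i + t * (i == j)%:R.
Proof. by rewrite !mxE eqxx. Qed.

Lemma multiaffine_endpoint_le (F : 'rV[R]_m -> R) (d : 'rV[R]_m) j :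
  multiaffine F -> dm j <= d ord0 j <= dp j ->
  exists2 v, (v == dm j) || (v == dp j) & F (d + (v - d ord0 j) *: delta_mx 0 j) <= F d.
Proof.
move=> hF /andP [lo hi]; have [le_F|lt_F] := lerP (F d) (F (d + delta_mx 0 j)).
  by exists (dm j); rewrite ?eqxx // hF; nra.
by exists (dp j); rewrite ?eqxx ?orbT // hF; nra.
Qed.

Lemma multiaffine_vertex_le (F : 'rV[R]_m -> R) (d : 'rV[R]_m) :
  multiaffine F -> Dset dm dp d -> exists s, F (vertex dm dp s) <= F d.
Proof.
move=> hF; pose at_end (d : 'rV[R]_m) j := (d ord0 j == dm j) || (d ord0 j == dp j).
suff IH k : forall d, Dset dm dp d -> (forall j : 'I_m, (k <= j)%N -> at_end d j) ->
    exists s, F (vertex dm dp s) <= F d.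
  by move=> hd; apply: (IH m) => // j; rewrite leqNgt ltn_ord.
elim: k => [|k IH] {}d hd ends.
  exists [ffun j => d ord0 j == dp j].
  suff -> : vertex dm dp [ffun j => d ord0 j == dp j] = d by [].
  apply/rowP => j; rewrite !mxE ffunE; case: eqP => [-> //|ne_dp].
  by case/orP: (ends j (leq0n _)) => /eqP.
have [lt_k_m|le_m_k] := ltnP k m; last first.
  by apply: IH => // j le_kj; move: (leq_trans le_m_k le_kj); rewrite leqNgt ltn_ord.
pose j0 := Ordinal lt_k_m.
have [v v_end le_F] := multiaffine_endpoint_le hF (hd j0).
pose d' := d + (v - d ord0 j0) *: delta_mx 0 j0.
have d'E j : d' ord0 j = if j == j0 then v else d ord0 j.
  by rewrite add_delta_mxE; case: eqP => [->|_]; rewrite ?mulr1 ?mulr0 ?addr0 // addrC subrK.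
have d'_box : Dset dm dp d'.
  move=> j; rewrite d'E; case: eqP => [->|_]; last exact: hd.
  by case/orP: v_end => /eqP ->; rewrite le_dm_dp lexx.
have d'_ends (j : 'I_m) : (k <= j)%N -> at_end d' j.
  rewrite /at_end !d'E; case: ifP => [/eqP -> _ //|/negbT ne_j le_kj]; apply: ends.
  by rewrite ltn_neqAle le_kj andbT; apply: contra ne_j => /eqP e; apply/eqP/val_inj.
have [s le_Fs] := IH d' d'_box d'_ends.
by exists s; apply: le_trans le_F.
Qed.

Lemma multiaffine_vertex_ge (F : 'rV[R]_m -> R) (d : 'rV[R]_m) :
  multiaffine F -> Dset dm dp d -> exists s, F d <= F (vertex dm dp s).
Proof.
move=> /multiaffineN hF hd; have [s le_s] := multiaffine_vertex_le hF hd.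
by exists s; rewrite -lerN2.
Qed.

End VertexExtremum.

Section Initially.
Variable R : realType.

Definition initially (P : R -> Prop) := exists e, 0 < e /\ forall k, 0 < k < e -> P k.

Lemma initially_mono (P Q : R -> Prop) :
  (forall k, P k -> Q k) -> initially P -> initially Q.
Proof. by move=> PQ [e [e0 hP]]; exists e; split=> // k /hP /PQ. Qed.

Lemma initially_and (P Q : R -> Prop) :
  initially P -> initially Q -> initially (fun k => P k /\ Q k).
Proof.
move=> [e1 [e1_gt0 hP]] [e2 [e2_gt0 hQ]]; exists (Order.min e1 e2).
split=> [|k /andP [k_gt0 lt_k]]; first by rewrite lt_min e1_gt0.
by move: lt_k; rewrite lt_min => /andP [k1 k2]; split; [apply: hP | apply: hQ];
  rewrite k_gt0.
Qed.

Lemma initially_big (I : finType) (P : I -> R -> Prop) :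
  (forall i, initially (P i)) -> initially (fun k => forall i, P i k).
Proof.
move=> /choice [e he]; exists (\big[Order.min/1]_i e i); split.
  by apply/bigmin_gtP; split=> // i _; case: (he i).
move=> k /andP [k_gt0 lt_k] i; apply: (he i).2.
by rewrite k_gt0 (lt_le_trans lt_k) ?bigmin_le.
Qed.

Lemma initially_witness (P : R -> Prop) : initially P -> exists k, P k.
Proof.
move=> [e [e_gt0 hP]]; exists (e / 2); apply: hP.
by rewrite divr_gt0 // ltr_pdivrMr // ltr_pMr // ltr1n.
Qed.

Lemma poly_initially_sign (q : {poly R}) :
  initially_positive (horner q) \/ initially (fun x => q.[x] <= 0).
Proof.
have [->|q_neq0] := eqVneq q 0; first by right; exists 1; split=> // x _; rewrite horner0.
have e_gt0 : 0 < next_root q 0 1 := next_root_gt ltr01 q_neq0.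
have sg x : 0 < x < next_root q 0 1 -> Num.sg q.[x] = sgp_right q 0.
  by move=> hx; apply: (sgr_neighpr (b := 1)); rewrite /neighpr in_itv.
have [sg1|sgN1] := eqVneq (sgp_right q 0) 1; [left|right]; exists (next_root q 0 1);
  split=> // x /sg; rewrite ?sg1 ?(negPf sgN1).
- by move/eqP; rewrite sgr_cp0.
- by rewrite leNgt -sgr_cp0 => ->.
Qed.

Definition lower_envelope (I : Type) (f : I -> R -> R) (g : R -> R) :=
  forall k, exists2 i, g k = f i k & forall j, f i k <= f j k.

Definition upper_envelope (I : Type) (f : I -> R -> R) (g : R -> R) :=
  forall k, exists2 i, g k = f i k & forall j, f j k <= f i k.

Section Envelope.
Variables (I : finType) (f : I -> R -> R) (g : R -> R).

Lemma lower_envelope_initially_positive : lower_envelope f g ->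
  initially_positive g <-> forall i, initially_positive (f i).
Proof.
move=> hg; split=> [g_pos i|f_pos].
  apply: initially_mono g_pos => k; have [j -> le_j] := hg k.
  by move=> fj_pos; apply: lt_le_trans fj_pos (le_j i).
apply: initially_mono (initially_big f_pos) => k f_pos_k.
by have [i -> _] := hg k.
Qed.

Lemma upper_envelope_initially_positive : upper_envelope f g ->
  (forall i, initially_positive (f i) \/ initially (fun k => f i k <= 0)) ->
  initially_positive g <-> exists i, initially_positive (f i).
Proof.
move=> hg f_sign; split=> [g_pos|[i f_pos]]; last first.
  apply: initially_mono f_pos => k f_pos_k.
  by have [j -> le_j] := hg k; apply: lt_le_trans f_pos_k (le_j i).
apply: contrapT => no_pos.
have f_npos i : initially (fun k => f i k <= 0).
  by case: (f_sign i) => // f_pos; case: no_pos; exists i.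
have [k [g_pos_k f_npos_k]] := initially_witness (initially_and g_pos (initially_big f_npos)).
by have [i gk _] := hg k; move: g_pos_k; rewrite gk ltNge f_npos_k.
Qed.

Lemma lower_envelope_neg : lower_envelope f g ->
  (exists k, 0 <= k /\ g k < 0) <-> exists k i, 0 <= k /\ f i k < 0.
Proof.
move=> hg; split=> [[k [k_ge0 gk_lt0]]|[k [i [k_ge0 fk_lt0]]]].
  by have [i gk _] := hg k; exists k, i; rewrite -gk.
by exists k; split=> //; have [j -> le_j] := hg k; apply: le_lt_trans (le_j i) fk_lt0.
Qed.

Lemma upper_envelope_neg : upper_envelope f g ->
  (exists k, 0 <= k /\ g k < 0) <-> exists k, 0 <= k /\ forall i, f i k < 0.
Proof.
move=> hg; split=> [[k [k_ge0 gk_lt0]]|[k [k_ge0 fk_lt0]]].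
  by exists k; split=> // i; have [j gk le_j] := hg k; apply: le_lt_trans (le_j i) _; rewrite -gk.
by exists k; split=> //; have [i -> _] := hg k.
Qed.

End Envelope.
End Initially.

Lemma inf_eq_min (R : realType) (E : set R) x : E x -> lbound E x -> inf E = x.
Proof.
move=> Ex lbx; apply/le_anti; rewrite lb_le_inf ?andbT //; last by exists x.
by apply: ge_inf => //; exists x.
Qed.

Lemma sup_eq_max (R : realType) (E : set R) x : E x -> ubound E x -> sup E = x.
Proof.
move=> Ex ubx; apply/le_anti; rewrite ge_sup //; last by exists x.
by apply: ub_le_sup => //; exists x.
Qed.

Section DetBox.
Variables (R : realType) (n m : nat) (B : 'M[int]_(n, m)) (C : 'M[int]_(m, n)).
Variables (J2 J4 : 'M[R]_n).

Lemma Mk_add_delta (d : 'rV[R]_m) j t k :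
  Mk B C J2 J4 (d + t *: delta_mx 0 j) k =
  Mk B C J2 J4 d k + t *: (- col j (map_mx intr B) *m row j (map_mx intr C)).
Proof.
have diag_delta : diag_mx (delta_mx 0 j) = delta_mx j j :> 'M[R]_m.
  apply/matrixP => a b; rewrite !mxE eqxx /=.
  have [<-|ne_ab] := eqVneq a b; first by rewrite mulr1n andbb.
  rewrite mulr0n; case: eqP => [ea|] //; case: eqP => [eb|] //.
  by move: ne_ab; rewrite ea eb eqxx.
rewrite /Mk.
have -> : diag_mx (d + t *: delta_mx 0 j) = diag_mx d + t *: delta_mx j j.
  by rewrite linearD linearZ /= diag_delta.
have rank1 : col j (map_mx intr B) *m row j (map_mx intr C) =
    map_mx intr B *m delta_mx j j *m map_mx (intr : int -> R) C.
  by rewrite colE rowE mulmxA -(mulmxA _ (delta_mx j 0)) mul_delta_mx.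
rewrite mulmxDr mulmxDl -scalemxAr -scalemxAl mulNmx scalerN rank1 -opprD.
by rewrite (addrAC _ (t *: _)) (addrAC _ (t *: _)).
Qed.

Lemma multiaffine_detk k : multiaffine (fun d : 'rV[R]_m => detk B C J2 J4 d k).
Proof.
move=> d j t; have := Mk_add_delta d j 1 k; rewrite !scale1r /detk => ->.
by rewrite Mk_add_delta det_add_rank1.
Qed.

Lemma detk_horner (d : 'rV[R]_m) : exists q : {poly R}, detk B C J2 J4 d = horner q.
Proof.
pose A := map_mx intr B *m diag_mx d *m map_mx intr C.
exists (\det (- (map_mx polyC A + 'X^2 *: map_mx polyC J2 + 'X^4 *: map_mx polyC J4))).
apply/funext => k; rewrite -horner_evalE -det_map_mx /detk; congr (\det _).
by apply/matrixP => i j; rewrite !mxE /= horner_evalE !hornerE.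
Qed.

Variables (dm dp : 'I_m -> R).
Hypothesis le_dm_dp : forall j, dm j <= dp j.

Lemma Psi_minus_lower_envelope :
  lower_envelope (pvert B C J2 J4 dm dp) (Psi_minus B C J2 J4 dm dp).
Proof.
move=> k; pose p s := pvert B C J2 J4 dm dp s k.
have [s _ min_s] := @arg_minP _ _ _ [ffun=> false] xpredT p isT.
exists s => [|s']; last exact: min_s.
apply: inf_eq_min => [|_ [d d_box <-]]; first by exists (vertex dm dp s) => //; apply: vertex_in_box.
have [s' le_s'] := multiaffine_vertex_le le_dm_dp (multiaffine_detk k) d_box.
exact: le_trans (min_s s' isT) le_s'.
Qed.

Lemma Psi_plus_upper_envelope :
  upper_envelope (pvert B C J2 J4 dm dp) (Psi_plus B C J2 J4 dm dp).
Proof.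
move=> k; pose p s := pvert B C J2 J4 dm dp s k.
have [s _ max_s] := @arg_maxP _ _ _ [ffun=> false] xpredT p isT.
exists s => [|s']; last exact: max_s.
apply: sup_eq_max => [|_ [d d_box <-]]; first by exists (vertex dm dp s) => //; apply: vertex_in_box.
have [s' le_s'] := multiaffine_vertex_ge le_dm_dp (multiaffine_detk k) d_box.
exact: le_trans le_s' (max_s s' isT).
Qed.

End DetBox.

Unset Implicit Arguments.

Theorem proposition2 (R : realType) (n m : nat) (hn : (0 < n)%N) (hm : (0 < m)%N)
  (B : 'M[int]_(n, m)) (C : 'M[int]_(m, n)) (J2 J4 : 'M[R]_n)
  (hJ2 : J2^T = J2) (hJ4 : J4^T = J4)
  (dm dp : 'I_m -> R) (hdm : forall j, 0 <= dm j) (hdmp : forall j, dm j <= dp j) :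
  let Psim := Psi_minus B C J2 J4 dm dp in
  let Psip := Psi_plus B C J2 J4 dm dp in
  let p := pvert B C J2 J4 dm dp in
  [/\ initially_positive Psim <-> (forall s, initially_positive (p s)),
      initially_positive Psip <-> (exists s, initially_positive (p s)),
      (exists k, 0 <= k /\ Psim k < 0) <-> (exists k s, 0 <= k /\ p s k < 0)
    & (exists k, 0 <= k /\ Psip k < 0) <-> (exists k, 0 <= k /\ forall s, p s k < 0)].
Proof.
move=> Psim Psip p.
have lower := Psi_minus_lower_envelope B C J2 J4 hdmp.
have upper := Psi_plus_upper_envelope B C J2 J4 hdmp.
have p_sign s : initially_positive (p s) \/ initially (fun k => p s k <= 0).
  rewrite /p /pvert; have [q ->] := detk_horner B C J2 J4 (vertex dm dp s).
  exact: poly_initially_sign.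
split.
- exact: lower_envelope_initially_positive lower.
- exact: upper_envelope_initially_positive upper p_sign.
- exact: lower_envelope_neg lower.
- exact: upper_envelope_neg upper.
Qed.
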